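(* Let $n\ge 3$, let ${\bf a}=(1)$, and let ${\bf b}=(\beta_1,\ldots,\beta_q)$, ${\bf c}=(\gamma_1,\ldots,\gamma_r)$ be sequences of positive integers with sums at most $n$, such that $2\le q\le r$. If $\mathcal T_{{\bf a},{\bf b},{\bf c}}$ has finitely many $G$-orbits, then ${\bf b}$ or ${\bf c}$ equals $(k,n-k)$ for some integer $k$.
   Context: $\mathbb F$ is an infinite field of characteristic $\ne 2$. Equip $\mathbb F^{2n}$ (canonical basis $e_1,\ldots,e_{2n}$) with the symmetric bilinear form $(e_i,e_j)=\delta_{i,2n+1-j}$, and let $G={\rm O}_{2n}(\mathbb F)$ be its isometry group. A subspace $V$ is isotropic if $(V,V)=\{0\}$. For a sequence ${\bf a}=(\alpha_1,\ldots,\alpha_p)$ of positive integers with $\sum\alpha_j\le n$, $M_{\bf a}$ is the set of flags $V_1\subset\cdots\subset V_p$ in $\mathbb F^{2n}$ with $\dim V_j=\alpha_1+\cdots+\alpha_j$ and $V_p$ isotropic. $\mathcal T_{{\bf a},{\bf b},{\bf c}}=M_{\bf a}\times M_{\bf b}\times M_{\bf c}$ with the diagonal $G$-action. *)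

From HB Require Import structures.
From mathcomp Require Import all_boot all_order all_algebra.
Set Implicit Arguments. Unset Strict Implicit. Unset Printing Implicit Defensive.
Import GRing.Theory.
Local Open Scope ring_scope.

(* Ambient space F^(2n) as row vectors 'rV[F]_(2*n); canonical basis
   e_1..e_(2n) correspond to delta indices 0..2n-1. *)
Section Defs.
Variables (F : fieldType) (n : nat).

Notation vecT := 'rV[F]_(2 * n).

(* Gram matrix of the form (e_i,e_j) = delta_{i,2n+1-j} (1-indexed),
   i.e. entry (i,j) (0-indexed) is 1 iff i + j = 2n - 1. *)
Definition Jmx : 'M[F]_(2 * n) :=
  \matrix_(i, j) (((i + j)%N == (2 * n).-1)%:R).

Definition form (u v : vecT) : F := (u *m Jmx *m v^T) 0 0.

Definition isotropic (V : {vspace vecT}) : Prop :=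
  forall u v, u \in V -> v \in V -> form u v = 0.

Definition in_O (g : 'M[F]_(2 * n)) : Prop := g *m Jmx *m g^T = Jmx.

Definition is_flag (a : seq nat) (s : seq {vspace vecT}) : Prop :=
  [/\ size s = size a,
      (forall j, (j < size s)%N -> \dim (nth 0%VS s j) = sumn (take j.+1 a)),
      (forall j, (j.+1 < size s)%N -> (nth 0%VS s j <= nth 0%VS s j.+1)%VS)
    & isotropic (last 0%VS s)].

Definition flag_act (g : 'M[F]_(2 * n)) (s : seq {vspace vecT}) :=
  map (fun V => (linfun (mulmxr g) @: V)%VS) s.

Definition triple := (seq {vspace vecT} * seq {vspace vecT} * seq {vspace vecT})%type.

Definition in_T (a b c : seq nat) (x : triple) : Prop :=
  [/\ is_flag a x.1.1, is_flag b x.1.2 & is_flag c x.2].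

Definition triple_act (g : 'M[F]_(2 * n)) (x : triple) : triple :=
  (flag_act g x.1.1, flag_act g x.1.2, flag_act g x.2).

Definition finitely_many_orbits (a b c : seq nat) : Prop :=
  exists reps : seq triple,
    forall x, in_T a b c x ->
      exists2 y, y \in reps & exists2 g, in_O g & triple_act g y = x.

End Defs.

(* Index the basis from 0, so that e_i pairs with e_(2n-1-i); the middle vectors
   e_3, ..., e_(n-1) pair only with e_n, ..., e_(2n-4), which are never used below.
   Unless b or c is (k, n - k), we have b1 + b2 < n and c1 + c2 < n, and can take the
   coordinate flags with B1 spanned by e_0 and middle vectors, e_1 in B2, C1 spanned by
   e_(2n-1) and middle vectors, e_(2n-2) in C2, together with the isotropic lines
     l_t = <e_0 + e_1 + e_2 + e_(2n-2) + t e_(2n-1) - (1 + t) e_(2n-3)>.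
   On B1 × C1, and on (B2 ∩ C1^⊥) × (C2 ∩ B1^⊥), the form only sees the
   coordinates of e_0, e_(2n-1), resp. e_1, e_(2n-2); so an isometry g fixing both
   flags acts on these four vectors by scalars a, 1/a, a', 1/a' modulo orthogonal parts.
   If g maps a generator of l_t to mu times one of l_t', pairing with the four vectors
   gives t = mu a t', mu / a = 1 and mu a' = mu / a' = 1, hence mu = a, mu^2 = 1 and
   t = t'.  Over an infinite field the lines l_t thus lie in infinitely many orbits. *)

From Pilot Require Import Defs.
From mathcomp Require Import all_boot all_order all_algebra zify ring.
From Stdlib Require Import IndefiniteDescription.
(* Shadows the [form] of mathcomp's sesquilinear library. *)
Import Pilot.Defs.
Set Implicit Arguments. Unset Strict Implicit. Unset Printing Implicit Defensive.
Import GRing.Theory.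
Local Open Scope ring_scope.

Section OrthogonalGroup.
Variables (F : fieldType) (n : nat).
Local Notation vec := 'rV[F]_(2 * n).
Local Notation J := (Jmx F n).

Lemma mulmxJ m (A : 'M[F]_(m, 2 * n)) i j : (A *m J) i j = A i (rev_ord j).
Proof.
rewrite mxE (bigD1 (rev_ord j)) //= big1 => [|k /eqP nkj]; rewrite mxE.
  by rewrite (_ : (_ == _) = true) ?mulr1 ?addr0 //=; have := ltn_ord j; lia.
rewrite (_ : (_ == _) = false) ?mulr0 //; apply/negbTE/eqP => kj; apply: nkj.
by apply: val_inj => /=; have := ltn_ord j; lia.
Qed.

Lemma trmxJ : J^T = J.
Proof. by apply/matrixP => i j; rewrite !mxE addnC. Qed.

Lemma mulmxJJ : J *m J = 1%:M.
Proof.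
apply/matrixP => i j; rewrite mulmxJ !mxE; congr (_%:R).
by rewrite -val_eqE /=; have := ltn_ord i; have := ltn_ord j; lia.
Qed.

Lemma formE (u v : vec) : form u v = \sum_(j < 2 * n) u 0 (rev_ord j) * v 0 j.
Proof. by rewrite /form mxE; apply: eq_bigr => j _; rewrite mulmxJ mxE. Qed.

Lemma form_sym (u v : vec) : form u v = form v u.
Proof.
rewrite /form -[in LHS](trmxK (u *m J *m v^T)) [LHS]mxE.
by rewrite !trmx_mul trmxK trmxJ mulmxA.
Qed.

Lemma formDl (u u' v : vec) : form (u + u') v = form u v + form u' v.
Proof. by rewrite /form !mulmxDl mxE. Qed.

Lemma formZl a (u v : vec) : form (a *: u) v = a * form u v.
Proof. by rewrite /form -!scalemxAl mxE. Qed.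

Lemma formDr (u v v' : vec) : form u (v + v') = form u v + form u v'.
Proof. by rewrite form_sym formDl !(form_sym u). Qed.

Lemma formZr a (u v : vec) : form u (a *: v) = a * form u v.
Proof. by rewrite form_sym formZl form_sym. Qed.

Lemma form_mulmx (g : 'M[F]_(2 * n)) (u v : vec) :
  in_O g -> form (u *m g) (v *m g) = form u v.
Proof.
move=> gO; rewrite /form trmx_mul -!mulmxA.
by rewrite [g *m (J *m _)]mulmxA [g *m J *m _]mulmxA gO.
Qed.

Lemma O_unitmx (g : 'M[F]_(2 * n)) : in_O g -> g \in unitmx.
Proof.
move=> gO; have /mulmx1_unit[] // : g *m (J *m g^T *m J) = 1%:M.
by rewrite !mulmxA gO mulmxJJ.
Qed.

Lemma O_invmx_mul (g h : 'M[F]_(2 * n)) : in_O g -> in_O h -> in_O (invmx g *m h).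
Proof.
move=> gO hO; have gU := O_unitmx gO; rewrite /in_O.
have -> : invmx g *m h *m J *m (invmx g *m h)^T = invmx g *m (h *m J *m h^T) *m (invmx g)^T.
  by rewrite trmx_mul !mulmxA.
rewrite hO -{1}gO !mulmxA mulVmx // mul1mx -mulmxA trmx_inv mulmxV ?unitmx_tr //.
exact: mulmx1.
Qed.

Lemma flag_act_mul (g h : 'M[F]_(2 * n)) s :
  flag_act g (flag_act h s) = flag_act (h *m g) s.
Proof.
rewrite /flag_act -map_comp; apply: eq_map => V /=; rewrite -limg_comp; congr (_ @: V)%VS.
by apply/lfunP => v; rewrite comp_lfunE !lfunE /= mulmxA.
Qed.

Lemma triple_act_mul (g h : 'M[F]_(2 * n)) x :
  triple_act g (triple_act h x) = triple_act (h *m g) x.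
Proof. by rewrite /triple_act /= !flag_act_mul. Qed.

End OrthogonalGroup.

Section CoordinateSubspaces.
Variables (F : fieldType) (n : nat).
Local Notation vec := 'rV[F]_(2 * n).

Definition evec (k : nat) : vec := \row_j (nat_of_ord j == k)%:R.

Definition supported (S : {pred nat}) (w : vec) :=
  forall j : 'I_(2 * n), nat_of_ord j \notin S -> w 0 j = 0.

Lemma supported_sub (S S' : {pred nat}) (w : vec) :
  {subset S <= S'} -> supported S w -> supported S' w.
Proof. by move=> SS' wS j jS'; apply: wS; apply: contra jS'; apply: SS'. Qed.

Lemma form_evec_coord k w (j : 'I_(2 * n)) : (j + k).+1 = 2 * n -> form (evec k) w = w 0 j.
Proof.
move=> jk; rewrite formE (bigD1 j) //= big1 => [|i /eqP ij]; rewrite mxE /=.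
  by rewrite (_ : (_ == _) = true) ?mul1r ?addr0 //; lia.
rewrite (_ : (_ == _) = false) ?mul0r //; apply/negbTE/eqP => ik; apply: ij.
by apply: ord_inj; have := ltn_ord i; lia.
Qed.

Lemma form_evec i k : form (evec i) (evec k) = ((i + k).+1 == 2 * n)%:R.
Proof.
case: (ltnP i (2 * n)) => ilt.
  have jlt : (2 * n - i.+1 < 2 * n)%N by lia.
  by rewrite (form_evec_coord _ (j := Ordinal jlt)) ?mxE /=; [congr (_%:R); lia | lia].
rewrite formE big1 => [|j _]; first by rewrite (_ : (_ == _) = false) //; lia.
by rewrite mxE /= (_ : (2 * n - j.+1 == i)%N = false) ?mul0r //; have := ltn_ord j; lia.
Qed.

Lemma form_evec_off_support S k w :
  supported S w -> (2 * n - k.+1)%N \notin S -> form (evec k) w = 0.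
Proof.
move=> wS kS; rewrite formE big1 // => j _; rewrite mxE.
case: eqP => [jk|]; last by rewrite mul0r.
rewrite wS ?mulr0 // (_ : nat_of_ord j = 2 * n - k.+1)%N //.
by move: jk => /=; have := ltn_ord j; lia.
Qed.

Lemma form_supported_predU1 (M : {pred nat}) k u w : (k < 2 * n)%N ->
  {in M, forall j, form (evec j) u = 0} -> supported [predU1 k & M] w ->
  form u w = form (evec k) u * form (evec (2 * n - k.+1)) w.
Proof.
move=> kn uM wS; rewrite formE (bigD1 (Ordinal kn)) //= big1 ?addr0 => [|j /eqP jk].
  rewrite (@form_evec_coord k u (rev_ord (Ordinal kn))) /=; last lia.
  by rewrite (@form_evec_coord _ w (Ordinal kn)) //=; lia.
case: (boolP (nat_of_ord j \in M)) => jM.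
  by rewrite -(@form_evec_coord j u (rev_ord j)) ?uM ?mul0r //=; have := ltn_ord j; lia.
rewrite wS ?mulr0 // !inE negb_or jM andbT; apply/eqP => jk'; apply: jk.
exact: ord_inj.
Qed.

Lemma supported_predU1_shrink (S : {pred nat}) a w : (a < 2 * n)%N ->
  supported [predU1 a & S] w -> form (evec (2 * n - a.+1)) w = 0 -> supported S w.
Proof.
move=> an wS wa j jS; have [ja|ja] := eqVneq (nat_of_ord j) a.
  by rewrite -wa (form_evec_coord _ (j := j)) //; lia.
by apply: wS; rewrite !inE negb_or ja.
Qed.

Definition cspan (s : seq nat) : {vspace vec} := <<map evec s>>%VS.

Lemma evec_cspan s k : k \in s -> evec k \in cspan s.
Proof. by move=> ks; apply/memv_span/map_f. Qed.

Lemma cspan_sub s s' : {subset s <= s'} -> (cspan s <= cspan s')%VS.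
Proof. by move=> ss'; apply/sub_span => _ /mapP[k ks ->]; apply/map_f/ss'. Qed.

Lemma cspan_supported s w : w \in cspan s -> supported (mem s) w.
Proof.
move=> /(@coord_span _ _ _ (in_tuple (map evec s))) -> j js; rewrite summxE big1 // => i _.
rewrite !mxE (nth_map 0%N) ?mxE; last by rewrite -(size_map evec).
rewrite (_ : (_ == _) = false) ?mulr0 //; apply: contraNF js => /eqP ->.
by apply: mem_nth; rewrite -(size_map evec).
Qed.

Lemma dim_cspan s : all (fun k => k < 2 * n)%N s -> uniq s -> \dim (cspan s) = size s.
Proof.
move=> sn us; rewrite -(size_map evec); apply/eqP; change (free (map evec s)).
elim: s sn us => [_ _|k s IHs /andP[kn sn] /andP[ks us]]; first exact: nil_free.
rewrite /= free_cons IHs // andbT; apply/negP => /cspan_supported/(_ (Ordinal kn) ks)/eqP.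
by rewrite !mxE eqxx oner_eq0.
Qed.

Lemma isotropic_cspan s : {in s &, forall i k, (i + k).+1 != 2 * n} -> isotropic (cspan s).
Proof.
move=> sI u v /cspan_supported uS /cspan_supported vS; rewrite formE big1 // => j _.
case: (boolP (nat_of_ord j \in s)) => js; last by rewrite vS ?mulr0.
case: (boolP (nat_of_ord (rev_ord j) \in s)) => rjs; last by rewrite uS ?mul0r.
by have := sI _ _ rjs js; have := ltn_ord j; rewrite /=; lia.
Qed.

Definition coord_flag (b ord : seq nat) : seq {vspace vec} :=
  [seq cspan (take (sumn (take j.+1 b)) ord) | j <- iota 0 (size b)].

Lemma coord_flag_is_flag b ord :
  all (fun k => k < 2 * n)%N ord -> uniq ord -> (sumn b <= size ord)%N ->
  {in ord &, forall i k, (i + k).+1 != 2 * n} -> is_flag b (coord_flag b ord).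
Proof.
move=> ordn uord bord ordI; have sumn_take j : (sumn (take j b) <= sumn b)%N.
  by rewrite -{2}(cat_take_drop j b) sumn_cat leq_addr.
split; first by rewrite size_map size_iota.
- move=> j; rewrite size_map size_iota => jb; rewrite (nth_map 0%N) ?size_iota // nth_iota //.
  rewrite dim_cspan ?take_uniq ?size_takel ?(leq_trans (sumn_take _)) //.
  by apply/allP => k /mem_take; apply: (allP ordn).
- move=> j; rewrite size_map size_iota => jb.
  rewrite !(nth_map 0%N) ?size_iota ?nth_iota //; try lia.
  apply/cspan_sub => k; rewrite -(@take_takel _ _ (sumn (take j.+2 b))) => [/mem_take //|].
  by rewrite -(cat_take_drop j.+1 (take j.+2 b)) take_takel // sumn_cat leq_addr.
- have /predU1P[->|/mapP[j _ ->]] := mem_last 0%VS (coord_flag b ord).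
    by rewrite -span_nil -[<<_>>%VS]/(cspan [::]); apply: isotropic_cspan.
  by apply: isotropic_cspan => i k /mem_take ? /mem_take ?; apply: ordI.
Qed.

End CoordinateSubspaces.

Arguments evec {F n} k.
Arguments cspan {F n} s.

Section LineInvariant.
Variables (F : fieldType) (n : nat).
Local Notation vec := 'rV[F]_(2 * n).

Definition stable (g : 'M[F]_(2 * n)) (P : vec -> Prop) := forall w, P w -> P (w *m g).

Definition rank_one_on (P Q : vec -> Prop) (x y : vec) :=
  forall w q, P w -> Q q -> form w q = form y w * form x q.

Lemma rank_one_on_mulmx g P Q x y : in_O g -> stable g P -> stable g Q ->
  P x -> Q y -> form x y = 1 -> rank_one_on P Q x y ->
  form y (x *m g) * form x (y *m g) = 1.
Proof. by move=> gO gP gQ Px Qy xy PQ; rewrite -PQ ?form_mulmx //; [apply: gP | apply: gQ]. Qed.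

Definition orth (V : {vspace vec}) (w : vec) := forall u, u \in V -> form w u = 0.

Lemma stable_vspace g (V : {vspace vec}) :
  (linfun (mulmxr g) @: V)%VS = V -> stable g (fun w => w \in V).
Proof. by move=> gV w wV; rewrite -gV; have := memv_img (linfun (mulmxr g)) wV; rewrite lfunE. Qed.

Lemma stable_orth g (V : {vspace vec}) :
  in_O g -> (linfun (mulmxr g) @: V)%VS = V -> stable g (orth V).
Proof.
move=> gO gV w wV u; rewrite -gV => /memv_imgP[u' u'V ->].
by rewrite lfunE /= form_mulmx // wV.
Qed.

Lemma vline_image g (u u' : vec) : (linfun (mulmxr g) @: <[u]>)%VS = <[u']>%VS ->
  exists mu, u *m g = mu *: u'.
Proof.
move=> gu; apply/vlineP; rewrite -gu.
by have := memv_img (linfun (mulmxr g)) (memv_line u); rewrite lfunE.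
Qed.

Variables (P0 Q0 P1 Q1 : vec -> Prop) (x0 y0 x1 y1 : vec) (v : F -> vec).
Hypotheses (P0x0 : P0 x0) (Q0y0 : Q0 y0) (P1x1 : P1 x1) (Q1y1 : Q1 y1).
Hypotheses (x0y0 : form x0 y0 = 1) (x1y1 : form x1 y1 = 1).
Hypotheses (P0Q0 : rank_one_on P0 Q0 x0 y0) (P1Q1 : rank_one_on P1 Q1 x1 y1).
Hypothesis form_vP0 : forall t w, P0 w -> form (v t) w = t * form y0 w.
Hypothesis form_vQ0 : forall t w, Q0 w -> form (v t) w = form x0 w.
Hypothesis form_vP1 : forall t w, P1 w -> form (v t) w = form y1 w.
Hypothesis form_vQ1 : forall t w, Q1 w -> form (v t) w = form x1 w.

Lemma line_parameter_invariant g t t' mu : in_O g ->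
  stable g P0 -> stable g Q0 -> stable g P1 -> stable g Q1 ->
  v t *m g = mu *: v t' -> t = t'.
Proof.
move=> gO gP0 gQ0 gP1 gQ1 vg.
have pull w : mu * form (v t') (w *m g) = form (v t) w.
  by rewrite -formZl -vg form_mulmx.
have e0 : mu * (t' * form y0 (x0 *m g)) = t.
  by rewrite -form_vP0 ?pull ?form_vP0 1?form_sym ?x0y0 ?mulr1 //; apply: gP0.
have e0' : mu * form x0 (y0 *m g) = 1.
  by rewrite -(form_vQ0 t') ?pull ?form_vQ0 //; apply: gQ0.
have e1 : mu * form y1 (x1 *m g) = 1.
  by rewrite -(form_vP1 t') ?pull ?form_vP1 1?form_sym //; apply: gP1.
have e1' : mu * form x1 (y1 *m g) = 1.
  by rewrite -(form_vQ1 t') ?pull ?form_vQ1 //; apply: gQ1.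
have r0 := rank_one_on_mulmx gO gP0 gQ0 P0x0 Q0y0 x0y0 P0Q0.
have r1 := rank_one_on_mulmx gO gP1 gQ1 P1x1 Q1y1 x1y1 P1Q1.
have a0_mu : form y0 (x0 *m g) = mu by rewrite -[LHS]mulr1 -e0' mulrCA r0 mulr1.
have mu2 : mu * mu = 1 by rewrite -[LHS]mulr1 -r1 mulrACA e1 e1' mulr1.
by rewrite -e0 a0_mu mulrCA mu2 mulr1.
Qed.

End LineInvariant.

Section BasisOrder.
Variable n : nat.
Local Notation mids := (iota 3 (n - 3)).

Definition mid := [pred j : nat | 3 <= j < n]%N.

Definition basis_order (s a b c : nat) : seq nat :=
  (a :: take s.-1 mids) ++ (b :: drop s.-1 mids) ++ [:: c].

Lemma perm_basis_order s a b c :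
  perm_eq (basis_order s a b c) [:: a, b, c & mids].
Proof.
rewrite /basis_order -{3}(cat_take_drop s.-1 mids); apply/permP => p.
by rewrite /= !count_cat /= count_cat /=; lia.
Qed.

Section Prefixes.
Variables (s a b c : nat).
Hypothesis s_range : (0 < s <= n - 2)%N.

Lemma size_basis_order_head : size (a :: take s.-1 mids) = s.
Proof. by rewrite /= size_takel ?size_iota; lia. Qed.

Lemma take_basis_order : take s (basis_order s a b c) = a :: take s.-1 mids.
Proof. by rewrite /basis_order take_size_cat // size_basis_order_head. Qed.

Lemma mem_take_basis_order m x : (m <= n - 1)%N ->
  x \in take m (basis_order s a b c) -> [|| x == a, x == b | x \in mid].
Proof.
move=> mn; rewrite /basis_order catA takel_cat; last first.
  by rewrite size_cat size_basis_order_head /= size_drop size_iota; lia.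
move=> /mem_take; rewrite mem_cat !inE => /orP[/orP[->//|/mem_take]|/orP[->|/mem_drop]];
  by rewrite ?orbT // mem_iota; lia.
Qed.

Lemma head_in_basis_order : a \in take s (basis_order s a b c).
Proof. by rewrite take_basis_order mem_head. Qed.

Lemma second_in_basis_order m : (s < m)%N -> b \in take m (basis_order s a b c).
Proof.
move=> sm; rewrite /basis_order take_cat size_basis_order_head ltnNge ltnW //.
by rewrite mem_cat; case: (m - s)%N (subn_gt0 s m) sm => [|k] /=; rewrite ?inE ?eqxx ?orbT //; lia.
Qed.

End Prefixes.

End BasisOrder.

Section CoordinateFlags.
Variables (F : fieldType) (n : nat).
Local Notation vec := 'rV[F]_(2 * n).
Local Notation mids := (iota 3 (n - 3)).

Lemma basis_order_flag (d : seq nat) s a b c :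
  {in [:: a, b, c & mids] &, forall i k, (i + k).+1 != 2 * n} ->
  uniq [:: a, b, c & mids] -> all (fun k => k < 2 * n)%N [:: a, b, c & mids] ->
  (sumn d <= n)%N -> is_flag d (coord_flag F n d (basis_order n s a b c)).
Proof.
move=> noPair uabc abcn dn; have pabc := perm_basis_order n s a b c.
apply: coord_flag_is_flag; rewrite ?(perm_all _ pabc) ?(perm_uniq pabc) //.
  by rewrite (perm_size pabc) /= size_iota; lia.
by move=> i k; rewrite !(perm_mem pabc); apply: noPair.
Qed.

Section PrefixSpans.
Variables (s a b c : nat).
Hypothesis s_range : (0 < s <= n - 2)%N.

Lemma cspan_prefix_supported (w : vec) :
  w \in cspan (take s (basis_order n s a b c)) -> supported [predU1 a & mid n] w.
Proof.
move/cspan_supported; apply: supported_sub => x.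
by rewrite (take_basis_order a b c s_range) !inE => /orP[->//|/mem_take]; rewrite mem_iota; lia.
Qed.

Lemma cspan_prefix2_supported m (w : vec) : (s < m <= n - 1)%N ->
  w \in cspan (take m (basis_order n s a b c)) -> supported [predU1 a & [predU1 b & mid n]] w.
Proof.
move=> /andP[_ mn] /cspan_supported; apply: supported_sub => x.
by move/(mem_take_basis_order s_range mn); rewrite !inE.
Qed.

End PrefixSpans.

End CoordinateFlags.

Section Line.
Variables (F : fieldType) (n : nat).
Hypothesis n_ge3 : (3 <= n)%N.
Local Notation vec := 'rV[F]_(2 * n).

Lemma form_supported_pair k k' (w q : vec) : (k < 3)%N -> (k + k').+1 = 2 * n ->
  supported [predU1 k & mid n] w -> supported [predU1 k' & mid n] q ->
  form w q = form (evec k') w * form (evec k) q.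
Proof.
move=> k3 kk' wS qS; rewrite (form_supported_predU1 (M := mid n) (k := k')) //.
- by rewrite (_ : 2 * n - k'.+1 = k)%N //; lia.
- lia.
- by move=> j; rewrite inE => jm; apply: (form_evec_off_support wS); rewrite !inE; lia.
Qed.

(* The e_2 and e_(2n-3) terms are only there to make the line isotropic. *)
Definition line_vec (t : F) : vec :=
  evec 0 + evec 1 + evec 2 + evec (2 * n - 2) + t *: evec (2 * n - 1)
  + (- (1 + t)) *: evec (2 * n - 3).

Local Ltac expand_line_vec :=
  rewrite /line_vec ?formDl ?formZl !formDr !formZr !form_evec;
  repeat match goal with |- context [@eq_op _ ?i ?k] =>
    first [rewrite [i == k](_ : _ = true); last lia
          |rewrite [i == k](_ : _ = false); last lia] end;
  rewrite /=.

Lemma form_mid_line_vec j t : j \in mid n -> form (evec j) (line_vec t) = 0.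
Proof. rewrite inE => /andP[j3 jn]; expand_line_vec; ring. Qed.

Lemma form_line_vec_values t :
  [/\ form (evec 0) (line_vec t) = t, form (evec 1) (line_vec t) = 1,
      form (evec (2 * n - 2)) (line_vec t) = 1 & form (evec (2 * n - 1)) (line_vec t) = 1].
Proof. by split; expand_line_vec; ring. Qed.

Lemma line_vec_neq0 t : line_vec t != 0.
Proof.
apply/eqP => t0; have [_ _ _] := form_line_vec_values t.
by rewrite t0 /form trmx0 mulmx0 mxE => /eqP; rewrite eq_sym oner_eq0.
Qed.

Lemma form_line_vec_supported t k (w : vec) : (k < 2 * n)%N -> supported [predU1 k & mid n] w ->
  form (line_vec t) w = form (evec k) (line_vec t) * form (evec (2 * n - k.+1)) w.
Proof.
by move=> kn wS; apply: (form_supported_predU1 (M := mid n)) kn _ wS => j; apply: form_mid_line_vec.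
Qed.

Lemma form_line_vec_self t : form (line_vec t) (line_vec t) = 0.
Proof. expand_line_vec; ring. Qed.

Lemma line_flag t : is_flag [:: 1%N] [:: <[line_vec t]>%VS].
Proof.
split=> //; first by case=> // _; rewrite dim_vline line_vec_neq0.
move=> u v /vlineP[a ->] /vlineP[a' ->].
by rewrite formZl formZr form_line_vec_self !mulr0.
Qed.

End Line.

Section FlagFamily.
Variables (F : fieldType) (n b1 b2 c1 c2 : nat) (b' c' : seq nat).
Hypothesis n_ge3 : (3 <= n)%N.
Hypotheses (b1_gt0 : (0 < b1)%N) (b2_gt0 : (0 < b2)%N) (b12_lt : (b1 + b2 < n)%N).
Hypotheses (c1_gt0 : (0 < c1)%N) (c2_gt0 : (0 < c2)%N) (c12_lt : (c1 + c2 < n)%N).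
Local Notation vec := 'rV[F]_(2 * n).
Local Notation Bord := (basis_order n b1 0 1 2).
Local Notation Cord := (basis_order n c1 (2 * n - 1) (2 * n - 2) (2 * n - 3)).
Local Notation B1 := (cspan (take b1 Bord) : {vspace vec}).
Local Notation B2 := (cspan (take (b1 + b2) Bord) : {vspace vec}).
Local Notation C1 := (cspan (take c1 Cord) : {vspace vec}).
Local Notation C2 := (cspan (take (c1 + c2) Cord) : {vspace vec}).

Definition flag_family (t : F) : triple F n :=
  ([:: <[line_vec n t]>%VS], coord_flag F n [:: b1, b2 & b'] Bord,
   coord_flag F n [:: c1, c2 & c'] Cord).

Lemma flag_family_in_T t : (sumn [:: b1, b2 & b'] <= n)%N -> (sumn [:: c1, c2 & c'] <= n)%N ->
  in_T [:: 1%N] [:: b1, b2 & b'] [:: c1, c2 & c'] (flag_family t).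
Proof.
move=> bn cn; split; first exact: line_flag.
all: apply: basis_order_flag => //;
  [ move=> i k; rewrite !inE !mem_iota; lia
  | rewrite /= !inE !mem_iota iota_uniq; lia
  | apply/allP => x; rewrite !inE mem_iota; lia ].
Qed.

Let b1_range : (0 < b1 <= n - 2)%N. Proof. lia. Qed.
Let c1_range : (0 < c1 <= n - 2)%N. Proof. lia. Qed.
Let b12_range : (b1 < b1 + b2 <= n - 1)%N. Proof. lia. Qed.
Let c12_range : (c1 < c1 + c2 <= n - 1)%N. Proof. lia. Qed.

Lemma B1_supported (w : vec) : w \in B1 -> supported [predU1 0%N & mid n] w.
Proof. exact: cspan_prefix_supported. Qed.

Lemma C1_supported (w : vec) : w \in C1 -> supported [predU1 (2 * n - 1)%N & mid n] w.
Proof. exact: cspan_prefix_supported. Qed.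

Local Notation P0 := (fun w : vec => w \in B1).
Local Notation Q0 := (fun w : vec => w \in C1).
Local Notation P1 := (fun w : vec => w \in B2 /\ orth C1 w).
Local Notation Q1 := (fun w : vec => w \in C2 /\ orth B1 w).

Lemma P1_supported (w : vec) : P1 w -> supported [predU1 1%N & mid n] w.
Proof.
case=> /(cspan_prefix2_supported b1_range b12_range) wS wC1.
refine (supported_predU1_shrink _ wS _); first lia.
by rewrite form_sym wC1 // evec_cspan // head_in_basis_order.
Qed.

Lemma Q1_supported (w : vec) : Q1 w -> supported [predU1 (2 * n - 2)%N & mid n] w.
Proof.
case=> /(cspan_prefix2_supported c1_range c12_range) wS wB1.
refine (supported_predU1_shrink _ wS _); first lia.
rewrite (_ : 2 * n - (2 * n - 1).+1 = 0)%N; last lia.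
by rewrite form_sym wB1 // evec_cspan // head_in_basis_order.
Qed.

Lemma flag_family_base_vectors :
  [/\ P0 (evec 0), Q0 (evec (2 * n - 1)), P1 (evec 1) & Q1 (evec (2 * n - 2))].
Proof.
split; try by apply/evec_cspan; apply: head_in_basis_order.
  split; first by apply/evec_cspan; apply: second_in_basis_order => //; lia.
  by move=> u /C1_supported uS; apply: (form_evec_off_support uS); rewrite !inE; lia.
split; first by apply/evec_cspan; apply: second_in_basis_order => //; lia.
by move=> u /B1_supported uS; apply: (form_evec_off_support uS); rewrite !inE; lia.
Qed.

Lemma flag_family_rank_one :
  rank_one_on P0 Q0 (evec 0) (evec (2 * n - 1)) /\
  rank_one_on P1 Q1 (evec 1) (evec (2 * n - 2)).
Proof.
split=> w q.
  by move=> /B1_supported wS /C1_supported qS; apply: form_supported_pair => //; lia.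
by move=> /P1_supported wS /Q1_supported qS; apply: form_supported_pair => //; lia.
Qed.

Lemma form_line_vec_flag_family :
  [/\ forall t w, P0 w -> form (line_vec n t) w = t * form (evec (2 * n - 1)) w,
      forall t w, Q0 w -> form (line_vec n t) w = form (evec 0) w,
      forall t w, P1 w -> form (line_vec n t) w = form (evec (2 * n - 2)) w
    & forall t w, Q1 w -> form (line_vec n t) w = form (evec 1) w].
Proof.
split=> t w => [/B1_supported|/C1_supported|/P1_supported|/Q1_supported] wS;
  have [l0 l1 l2 l3] := form_line_vec_values n_ge3 t;
  rewrite (form_line_vec_supported n_ge3 t _ wS); try lia.
- by rewrite l0.
- by rewrite l3 mul1r (_ : 2 * n - (2 * n - 1).+1 = 0)%N //; lia.
- by rewrite l1 mul1r.
- by rewrite l2 mul1r (_ : 2 * n - (2 * n - 2).+1 = 1)%N //; lia.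
Qed.

Lemma flag_family_separates g t t' :
  in_O g -> triple_act g (flag_family t) = flag_family t' -> t = t'.
Proof.
move=> gO; rewrite /triple_act /flag_family /coord_flag /= !take0 /= !addn0.
case=> /vline_image[mu lg] gB1 gB2 _ gC1 gC2 _.
have [P0x0 Q0y0 P1x1 Q1y1] := flag_family_base_vectors.
have [PQ0 PQ1] := flag_family_rank_one.
have [vP0 vQ0 vP1 vQ1] := form_line_vec_flag_family.
have pair k : (k < 2)%N -> form (evec k : vec) (evec (2 * n - k.+1)) = 1.
  by move=> k2; rewrite form_evec (_ : (_ == _) = true) //; lia.
apply: (line_parameter_invariant P0x0 Q0y0 P1x1 Q1y1 (pair 0%N isT) (pair 1%N isT)
  PQ0 PQ1 vP0 vQ0 vP1 vQ1 gO _ _ _ _ lg).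
- exact: stable_vspace gB1.
- exact: stable_vspace gC1.
- by move=> w [wB2 wC1]; split; [apply: (stable_vspace gB2) | apply: (stable_orth gO gC1)].
- by move=> w [wC2 wB1]; split; [apply: (stable_vspace gC2) | apply: (stable_orth gO gB1)].
Qed.

End FlagFamily.

Lemma uniq_seq_of_size (T : eqType) : (forall s : seq T, exists x, x \notin s) ->
  forall k, exists s : seq T, uniq s /\ size s = k.
Proof.
move=> Tinf; elim=> [|k [s [us sk]]]; first by exists [::].
by have [x xs] := Tinf s; exists (x :: s); rewrite /= xs us sk.
Qed.

Lemma separated_family_not_finitely_many_orbits (F : fieldType) n (a b c : seq nat)
    (X : F -> triple F n) :
  (forall s : seq F, exists t, t \notin s) ->
  (forall t, in_T a b c (X t)) ->
  (forall g t t', in_O g -> triple_act g (X t) = X t' -> t = t') ->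
  ~ finitely_many_orbits F n a b c.
Proof.
move=> Finf XT Xsep [reps reps_cover].
have rep t : {y | y \in reps /\ exists2 g, in_O g & triple_act g y = X t}.
  apply: constructive_indefinite_description.
  by have [y yr yX] := reps_cover _ (XT t); exists y.
have rep_inj : injective (fun t => sval (rep t)).
  move=> t t' /= yy'.
  have [_ [g gO gy]] := svalP (rep t); have [_ [g' gO' gy']] := svalP (rep t').
  apply: (Xsep (invmx g *m g')); first exact: O_invmx_mul.
  by rewrite -gy triple_act_mul mulmxA mulmxV ?O_unitmx // mul1mx yy'.
have [ts [uts sts]] := uniq_seq_of_size Finf (size reps).+1.
have uniq_reps : uniq [seq sval (rep t) | t <- ts] by rewrite map_inj_uniq.
suff : (size ts <= size reps)%N by rewrite sts ltnn.
rewrite -(size_map (fun t => sval (rep t))); apply: (uniq_leq_size uniq_reps) => _ /mapP[t _ ->].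
by have [] := svalP (rep t).
Qed.

Lemma two_parts_or_head_lt n b1 b2 b' :
  all (fun x => 0 < x)%N [:: b1, b2 & b'] -> (sumn [:: b1, b2 & b'] <= n)%N ->
  [:: b1, b2 & b'] = [:: b1; n - b1]%N \/ (b1 + b2 < n)%N.
Proof.
case: b' => [|x b'] /=; last by move=> /and4P[_ _ x_gt0 _]; right; lia.
by rewrite addn0 => _ b12; case: (ltnP (b1 + b2) n) => ?; [right | left; congr [:: _; _]; lia].
Qed.

Theorem proposition1p4 (F : fieldType) (n : nat) (b c : seq nat) :
  (forall s : seq F, exists x, x \notin s) ->
  (2%:R : F) != 0 ->
  (3 <= n)%N ->
  all (fun x => 0 < x)%N b -> all (fun x => 0 < x)%N c ->
  (sumn b <= n)%N -> (sumn c <= n)%N ->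
  (2 <= size b)%N -> (size b <= size c)%N ->
  finitely_many_orbits F n [:: 1%N] b c ->
  (exists k : nat, b = [:: k; (n - k)%N]) \/ (exists k : nat, c = [:: k; (n - k)%N]).
Proof.
move=> Finf _ n_ge3 bpos cpos bn cn.
case: b bpos bn => [|b1 [|b2 b']] // bpos bn _.
case: c cpos cn => [|c1 [|c2 c']] // cpos cn _ fin.
have [->|b12] := two_parts_or_head_lt bpos bn; first by left; exists b1.
have [->|c12] := two_parts_or_head_lt cpos cn; first by right; exists c1.
move: bpos cpos => /and3P[b1_gt0 b2_gt0 _] /and3P[c1_gt0 c2_gt0 _].
exfalso; apply: (separated_family_not_finitely_many_orbits
  (X := flag_family n b1 b2 c1 c2 b' c') Finf _ _ fin).
- by move=> t; apply: flag_family_in_T.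
- by move=> g t t'; apply: flag_family_separates.
Qed.
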